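(* Let $h,J\in\mathbb{R}$ with $J\neq 0$, let $\Gamma_{abs}>0$ and $\Gamma^z_{dph}>0$. Consider the two-qubit battery Hamiltonian $H_B$ and initial state $\rho_0$ described in the context, and for $\Gamma\ge 0$ let $\rho^{(\Gamma)}_t$ be the solution of the master equation $$\frac{d\rho}{dt}=-i[H_B,\rho]+\Gamma_{abs}\sum_{j=1}^{2}\Big(\sigma^+_j\rho\,\sigma^-_j-\tfrac12\{\sigma^-_j\sigma^+_j,\rho\}\Big)+\Gamma\sum_{j=1}^{2}\big(\sigma^z_j\rho\,\sigma^z_j-\rho\big),\qquad \rho(0)=\rho_0 .$$ Define the work gained $W_\Gamma(t)=\mathrm{Tr}(H_B\rho^{(\Gamma)}_t)-\mathrm{Tr}(H_B\rho_0)$. Then, in the transient regime, the work gained with local phase-flip noise exceeds the work gained without noise: there exists $t^*>0$ such that $W_{\Gamma^z_{dph}}(t)>W_0(t)$ for all $0<t<t^*$.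
   Context: Two qubits with computational basis $|00\rangle,|01\rangle,|10\rangle,|11\rangle$, where $\sigma^z|0\rangle=|0\rangle$, $\sigma^z|1\rangle=-|1\rangle$. $\sigma^x,\sigma^y,\sigma^z$ are the Pauli matrices, $\sigma^{\pm}=(\sigma^x\pm i\sigma^y)/2$, and $\sigma^a_1=\sigma^a\otimes I$, $\sigma^a_2=I\otimes\sigma^a$. The battery Hamiltonian (two-spin transverse Ising model) is, in the computational basis, $$H_B=\begin{pmatrix} h&0&0&J/4\\ 0&0&J/4&0\\ 0&J/4&0&0\\ J/4&0&0&-h\end{pmatrix}.$$ Set $e_0=-\sqrt{h^2+\tfrac{5J^2}{8}}$, $p=\frac{4(h+e_0)}{J}$, and let the initial state be $$\rho_0=\frac{1}{1+p^2}\begin{pmatrix} p^2&0&0&p\\ 0&0&0&0\\ 0&0&0&0\\ p&0&0&1\end{pmatrix}.$$ The terms with $\Gamma_{abs}$ model a local bosonic reservoir charging each spin (absorption channel); the terms with $\Gamma$ model local phase-flip (dephasing along $z$) noise on each spin; $\Gamma=0$ is the noiseless case. *)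

From HB Require Import structures.
From mathcomp Require Import all_boot all_order all_algebra.
From mathcomp Require Import complex mxtens.
From mathcomp Require Import all_classical all_reals all_analysis.
Set Implicit Arguments. Unset Strict Implicit. Unset Printing Implicit Defensive.
Import Order.TTheory GRing.Theory Num.Theory numFieldNormedType.Exports.
Local Open Scope classical_set_scope.
Local Open Scope ring_scope.

Section QBattery.
Variable R : realType.
Local Notation C := (R[i]).
Local Notation cst x := (Complex x 0).
Local Notation iC := (Complex 0 1 : C).

Definition reC (z : C) : R := let: Complex a _ := z in a.
Definition imC (z : C) : R := let: Complex _ b := z in b.

(* single-qubit operators in basis |0>,|1>, with sigma^z |0> = |0> *)
Definition sx : 'M[C]_2 := \matrix_(a < 2, b < 2) (if a != b then 1 else 0).
Definition sy : 'M[C]_2 :=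
  \matrix_(a < 2, b < 2)
    (if (a == 0%N :> nat) && (b == 1%N :> nat) then - iC
     else if (a == 1%N :> nat) && (b == 0%N :> nat) then iC else 0).
Definition sz : 'M[C]_2 :=
  \matrix_(a < 2, b < 2) (if a == b then (if a == 0%N :> nat then 1 else -1) else 0).
Definition splus : 'M[C]_2 := (cst (2^-1)) *: (sx + iC *: sy).
Definition sminus : 'M[C]_2 := (cst (2^-1)) *: (sx - iC *: sy).

(* two-qubit embeddings: sigma^a_1 = sigma^a (x) I, sigma^a_2 = I (x) sigma^a;
   the basis index of |a b> is 2a+b, i.e. |00>,|01>,|10>,|11>. *)
Definition on1 (A : 'M[C]_2) : 'M[C]_4 := A *t (1%:M : 'M[C]_2).
Definition on2 (A : 'M[C]_2) : 'M[C]_4 := (1%:M : 'M[C]_2) *t A.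

Definition HB (h J : R) : 'M[C]_4 :=
  \matrix_(k < 4, l < 4)
    (if (k == 0%N :> nat) && (l == 0%N :> nat) then cst h
     else if (k == 3%N :> nat) && (l == 3%N :> nat) then cst (- h)
     else if (k + l == 3)%N then cst (J / 4) else 0).

Definition e0 (h J : R) : R := - Num.sqrt (h ^+ 2 + 5 * J ^+ 2 / 8).
Definition pp (h J : R) : R := 4 * (h + e0 h J) / J.

Definition rho0 (h J : R) : 'M[C]_4 :=
  let p := pp h J in
  \matrix_(k < 4, l < 4)
    (cst (1 / (1 + p ^+ 2)) *
     (if (k == 0%N :> nat) && (l == 0%N :> nat) then cst (p ^+ 2)
      else if (k == 3%N :> nat) && (l == 3%N :> nat) then 1
      else if ((k == 0%N :> nat) && (l == 3%N :> nat)) ||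
              ((k == 3%N :> nat) && (l == 0%N :> nat)) then cst p
      else 0)).

Definition commut (A B : 'M[C]_4) := A *m B - B *m A.
Definition acommut (A B : 'M[C]_4) := A *m B + B *m A.

Definition lindblad (h J Gabs G : R) (rho : 'M[C]_4) : 'M[C]_4 :=
  - iC *: commut (HB h J) rho
  + cst Gabs *:
      (\sum_(j < 2)
        let sp := if j == 0%N :> nat then on1 splus else on2 splus in
        let sm := if j == 0%N :> nat then on1 sminus else on2 sminus in
        (sp *m rho *m sm - cst (2^-1) *: acommut (sm *m sp) rho))
  + cst G *:
      (\sum_(j < 2)
        let z := if j == 0%N :> nat then on1 sz else on2 sz in
        (z *m rho *m z - rho)).

Definition solves_ME (h J Gabs G : R) (rho : R -> 'M[C]_4) : Prop :=
  rho 0 = rho0 h J /\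
  (forall k l : 'I_4,
     {within [set t : R | 0 <= t], continuous (fun t => reC (rho t k l))} /\
     {within [set t : R | 0 <= t], continuous (fun t => imC (rho t k l))}) /\
  (forall t : R, 0 < t -> forall k l : 'I_4,
     is_derive t 1 (fun s => reC (rho s k l)) (reC (lindblad h J Gabs G (rho t) k l)) /\
     is_derive t 1 (fun s => imC (rho s k l)) (imC (lindblad h J Gabs G (rho t) k l))).

(* work gained W(t) = Tr(H_B rho_t) - Tr(H_B rho_0) (real part; it is real) *)
Definition work (h J : R) (rho : R -> 'M[C]_4) (t : R) : R :=
  reC (\tr (HB h J *m rho t) - \tr (HB h J *m rho0 h J)).

End QBattery.

From HB Require Import structures.
From mathcomp Require Import all_boot all_order all_algebra.
From mathcomp Require Import complex mxtens.
From mathcomp Require Import all_classical all_reals all_analysis.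
From mathcomp Require Import ring lra.
Set Implicit Arguments. Unset Strict Implicit. Unset Printing Implicit Defensive.
Import Order.TTheory GRing.Theory Num.Theory numFieldNormedType.Exports.
Local Open Scope classical_set_scope.
Local Open Scope ring_scope.

(* With E(rho) = Re Tr(H_B rho), the gap W_G(t) - W_0(t) is E(rho^G_t) - E(rho^0_t).
   It vanishes at t = 0, and its derivative E(L_G rho^G_t) - E(L_0 rho^0_t) is
   continuous on [0, +oo): E and E o L_G are real-linear, hence fixed linear
   combinations of the real and imaginary parts of the matrix entries.  At t = 0
   the derivative is G E(D rho_0), D the dephasing dissipator; D annihilates the
   populations of rho_0 and multiplies its coherences rho_03 = rho_30 = p/(1+p^2)
   by -4, so E(D rho_0) = -2 J p/(1+p^2) = -8 (h + e_0)/(1+p^2) > 0 since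
   e_0 < -|h|.  The mean value theorem then makes the gap positive just after 0. *)

Lemma gt0_right_of_derive (R : realType) (f g : R -> R) :
  f 0 = 0 -> 0 < g 0 ->
  {within [set t : R | 0 <= t], continuous f} ->
  {within [set t : R | 0 <= t], continuous g} ->
  (forall t : R, 0 < t -> is_derive t 1 f (g t)) ->
  exists e : R, 0 < e /\ forall t : R, 0 < t < e -> 0 < f t.
Proof.
move=> f0 g0_gt0 fc gc df.
have /subspace_continuousP/(_ 0 (lexx 0)) g_cvg0 := gc.
have /nbhs_ballP[e e_gt0 g_gt0] : nbhs (0 : R) (fun t : R => 0 <= t -> 0 < g t).
  exact: cvgr_gt g_cvg0 _ g0_gt0.
exists e; split=> // t /andP[t_gt0 te].
have itv_ge0 : `[0, t] `<=` [set s : R | 0 <= s].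
  by move=> s /=; rewrite in_itv => /andP[].
have df_itv x : x \in `]0, t[ -> is_derive x 1 f (g x).
  by rewrite in_itv => /andP[/df].
have [c] := MVT t_gt0 df_itv (continuous_subspaceW itv_ge0 fc).
rewrite in_itv /= => /andP[c_gt0 ct]; rewrite f0 !subr0 => ->.
rewrite mulr_gt0 //; apply: g_gt0; last exact: ltW.
by rewrite /ball /= sub0r normrN gtr0_norm // (lt_trans ct).
Qed.

Lemma lt_right_of_derive (R : realType) (f1 f2 g1 g2 : R -> R) :
  f1 0 = f2 0 -> g2 0 < g1 0 ->
  {within [set t : R | 0 <= t], continuous f1} ->
  {within [set t : R | 0 <= t], continuous f2} ->
  {within [set t : R | 0 <= t], continuous g1} ->
  {within [set t : R | 0 <= t], continuous g2} ->
  (forall t : R, 0 < t -> is_derive t 1 f1 (g1 t)) ->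
  (forall t : R, 0 < t -> is_derive t 1 f2 (g2 t)) ->
  exists e : R, 0 < e /\ forall t : R, 0 < t < e -> f2 t < f1 t.
Proof.
move=> f12 g12 /subspace_continuousP f1c /subspace_continuousP f2c.
move=> /subspace_continuousP g1c /subspace_continuousP g2c df1 df2.
have [e [e_gt0 f12_gt0]] :
    exists e : R, 0 < e /\ forall t : R, 0 < t < e -> 0 < (f1 - f2) t.
  apply: (@gt0_right_of_derive _ _ (g1 - g2)).
  - by rewrite !fctE f12 subrr.
  - by rewrite !fctE subr_gt0.
  - by apply/subspace_continuousP => x x0; apply: cvgB; [exact: f1c | exact: f2c].
  - by apply/subspace_continuousP => x x0; apply: cvgB; [exact: g1c | exact: g2c].
  - by move=> t t_gt0; apply: is_deriveB; [exact: df1 | exact: df2].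
by exists e; split=> // t /f12_gt0; rewrite !fctE subr_gt0.
Qed.

Section LinearClosure.
Variables (K : comPzRingType) (U V : lmodType K).
Implicit Types f g : U -> V.

Lemma add_fun_linear f g : linear f -> linear g -> linear (fun u => f u + g u).
Proof. by move=> lf lg a u v; rewrite lf lg scalerDr addrACA. Qed.

Lemma sub_fun_linear f g : linear f -> linear g -> linear (fun u => f u - g u).
Proof. by move=> lf lg a u v; rewrite lf lg scalerBr opprD addrACA. Qed.

Lemma scale_fun_linear c f : linear f -> linear (fun u => c *: f u).
Proof. by move=> lf a u v; rewrite lf scalerDr !scalerA mulrC. Qed.

Lemma sum_fun_linear n (F : 'I_n -> U -> V) :
  (forall i, linear (F i)) -> linear (fun u => \sum_(i < n) F i u).
Proof.
by move=> lF a u v; rewrite scaler_sumr -big_split; apply: eq_bigr => i _; apply: lF.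
Qed.
End LinearClosure.

Lemma mulmxl_linear (K : comPzRingType) m n p (P : 'M[K]_(m, n)) :
  linear (fun A : 'M[K]_(n, p) => P *m A).
Proof. by move=> a A B; rewrite mulmxDr scalemxAr. Qed.

Lemma sandwich_linear (K : comPzRingType) m n p q
    (P : 'M[K]_(m, n)) (Q : 'M[K]_(p, q)) :
  linear (fun A : 'M[K]_(n, p) => P *m A *m Q).
Proof. by move=> a A B; rewrite mulmxl_linear; apply: mulmxr_is_linear. Qed.

Section RealLinear.
Variables (R : realType) (m n : nat).
Local Notation C := R[i].

Definition real_linear (F : 'M[C]_(m, n) -> R) :=
  forall (r : R) A B, F (Complex r 0 *: A + B) = r * F A + F B.

Lemma real_linear_expansion F : real_linear F -> forall M,
  F M = \sum_k \sum_l (F (delta_mx k l) * reC (M k l)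
                       + F (Complex 0 1 *: delta_mx k l) * imC (M k l)).
Proof.
move=> linF M.
have FD A B : F (A + B) = F A + F B by rewrite -[A in LHS]scale1r linF mul1r.
have F0 : F 0 = 0 by apply: (addIr (F 0)); rewrite -FD !add0r.
have FZ r A : F (Complex r 0 *: A) = r * F A.
  by rewrite -[_ *: A]addr0 linF F0 addr0.
rewrite {1}(matrix_sum_delta M) (big_morph F FD F0); apply: eq_bigr => k _.
rewrite (big_morph F FD F0); apply: eq_bigr => l _.
case: (M k l) => x y /=.
have -> : Complex x y *: delta_mx k l =
    Complex x 0 *: delta_mx k l + Complex y 0 *: (Complex 0 1 *: delta_mx k l).
  by rewrite scalerA -scalerDl; congr (_ *: _); simpc.
by rewrite FD !FZ !(mulrC _ (F _)).
Qed.

Lemma real_linear_continuous (T : topologicalType) F (rho : T -> 'M[C]_(m, n)) :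
  real_linear F ->
  (forall k l, continuous (fun t => reC (rho t k l))) ->
  (forall k l, continuous (fun t => imC (rho t k l))) ->
  continuous (fun t => F (rho t)).
Proof.
move=> linF re_cont im_cont.
under [fun t => _]funext => t do rewrite (real_linear_expansion linF).
apply: continuous_big => [|k _]; first exact: add_continuous.
apply: continuous_big => [|l _]; first exact: add_continuous.
by move=> t; apply: cvgD; apply: cvgMr; [exact: re_cont | exact: im_cont].
Qed.

Lemma real_linear_derive F (rho : R -> 'M[C]_(m, n)) (x : R) (M : 'M[C]_(m, n)) :
  real_linear F ->
  (forall k l, is_derive x 1 (fun t => reC (rho t k l)) (reC (M k l))) ->
  (forall k l, is_derive x 1 (fun t => imC (rho t k l)) (imC (M k l))) ->
  is_derive x 1 (fun t => F (rho t)) (F M).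
Proof.
move=> linF re_der im_der.
have := is_derive_sum (fun k => is_derive_sum (fun l =>
  is_deriveD (is_deriveZ (F (delta_mx k l)) (re_der k l))
             (is_deriveZ (F (Complex 0 1 *: delta_mx k l)) (im_der k l)))).
rewrite -(real_linear_expansion linF); set S := (X in is_derive _ _ X _).
suff -> : S = (fun t => F (rho t)) by [].
apply/funext => t; rewrite /S (real_linear_expansion linF) !fct_sumE.
by apply: eq_bigr => k _; rewrite fct_sumE.
Qed.
End RealLinear.

Section Battery.
Variable R : realType.
Local Notation C := R[i].

Lemma lindblad_linear (h J Ga G : R) : linear (lindblad h J Ga G).
Proof.
have commut_linear (H : 'M[C]_4) : linear (commut H).
  by apply: sub_fun_linear; [apply: mulmxl_linear | apply: mulmxr_is_linear].
have acommut_linear (H : 'M[C]_4) : linear (acommut H).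
  by apply: add_fun_linear; [apply: mulmxl_linear | apply: mulmxr_is_linear].
apply: add_fun_linear; first apply: add_fun_linear; apply: scale_fun_linear.
- exact: commut_linear.
- apply: sum_fun_linear => j /=; apply: sub_fun_linear; first exact: sandwich_linear.
  by apply: scale_fun_linear; apply: acommut_linear.
- by apply: sum_fun_linear => j /=; apply: sub_fun_linear; first exact: sandwich_linear.
Qed.

Lemma reC_linear (r : R) (z w : C) : reC (Complex r 0 * z + w) = r * reC z + reC w.
Proof. by case: z; case: w => * /=; rewrite mul0r subr0. Qed.

Lemma reCB (z w : C) : reC (z - w) = reC z - reC w.
Proof. by case: z; case: w. Qed.

Definition energy (h J : R) (A : 'M[C]_4) : R := reC (\tr (HB h J *m A)).

Lemma energy_real_linear (h J : R) : real_linear (energy h J).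
Proof. by move=> r A B; rewrite /energy mulmxl_linear linearP reC_linear. Qed.

Lemma energy_lindblad_real_linear (h J Ga G : R) :
  real_linear (fun A => energy h J (lindblad h J Ga G A)).
Proof. by move=> r A B; rewrite lindblad_linear energy_real_linear. Qed.

Lemma work_energy (h J : R) rho t :
  work h J rho t = energy h J (rho t) - energy h J (rho0 h J).
Proof. exact: reCB. Qed.

Definition sz1_sign (k : 'I_4) : R := if (k < 2)%N then 1 else -1.
Definition sz2_sign (k : 'I_4) : R := if odd k then -1 else 1.

Lemma on1_sz : on1 (sz R) = diag_mx (\row_k Complex (sz1_sign k) 0).
Proof.
apply/matrixP => k l; rewrite !mxE /sz1_sign.
case: k => [[|[|[|[|k]]]] Hk] //; case: l => [[|[|[|[|l]]]] Hl] //=.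
all: by rewrite ?(mulr1, mulr0, mulr1n, mulr0n) //; simpc.
Qed.

Lemma on2_sz : on2 (sz R) = diag_mx (\row_k Complex (sz2_sign k) 0).
Proof.
apply/matrixP => k l; rewrite !mxE /sz2_sign.
case: k => [[|[|[|[|k]]]] Hk] //; case: l => [[|[|[|[|l]]]] Hl] //=.
all: by rewrite ?(mulr1, mulr0, mulr1n, mulr0n) //; simpc.
Qed.

Definition dephasing (A : 'M[C]_4) : 'M[C]_4 :=
  \sum_(j < 2)
    let z := if j == 0%N :> nat then on1 (sz R) else on2 (sz R) in
    (z *m A *m z - A).

Lemma lindblad_dephasing (h J Ga G : R) A :
  lindblad h J Ga G A = Complex G 0 *: dephasing A + lindblad h J Ga 0 A.
Proof. by rewrite [RHS]addrC /lindblad scale0r addr0. Qed.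

Lemma dephasing_mxE A k l : dephasing A k l =
  Complex (sz1_sign k * sz1_sign l + sz2_sign k * sz2_sign l - 2) 0 * A k l.
Proof.
rewrite /dephasing summxE !big_ord_recr big_ord0 /= add0r on1_sz on2_sz.
rewrite !mul_diag_mx !mul_mx_diag !mxE.
by case: (A k l) => a b; simpc; congr Complex; ring.
Qed.

Lemma energy_dephasing_rho0 (h J : R) :
  energy h J (dephasing (rho0 h J)) = - 2 * J * pp h J / (1 + pp h J ^+ 2).
Proof.
rewrite /energy /mxtrace !big_ord_recr big_ord0 !mxE !big_ord_recr !big_ord0 /=.
rewrite !dephasing_mxE !mxE /= /sz1_sign /sz2_sign /=.
have p2_neq0 : 1 + pp h J ^+ 2 != 0 by rewrite lt0r_neq0 // ltr_pwDl ?sqr_ge0.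
by field.
Qed.

Lemma h_add_e0_lt0 (h J : R) : J != 0 -> h + e0 h J < 0.
Proof.
move=> J_neq0; rewrite /e0 subr_lt0; apply: le_lt_trans (ler_norm h) _.
have J2_gt0 : 0 < J ^+ 2 by rewrite exprn_even_gt0.
have h2_ge0 := sqr_ge0 h.
by rewrite -sqrtr_sqr ltr_sqrt; lra.
Qed.

Lemma energy_dephasing_rho0_gt0 (h J : R) : J != 0 ->
  0 < energy h J (dephasing (rho0 h J)).
Proof.
move=> J_neq0; rewrite energy_dephasing_rho0.
have -> : - 2 * J * pp h J = - 8 * (h + e0 h J) by rewrite /pp; field.
rewrite divr_gt0 ?ltr_pwDl ?sqr_ge0 //.
by have := h_add_e0_lt0 h J_neq0; lra.
Qed.
End Battery.

Section Solution.
Variable R : realType.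
Variables (h J Ga G : R) (rho : R -> 'M[R[i]]_4).
Hypothesis rho_sol : solves_ME h J Ga G rho.

Lemma solution_continuous (F : 'M[R[i]]_4 -> R) : real_linear F ->
  {within [set t : R | 0 <= t], continuous (fun t => F (rho t))}.
Proof.
have [_ [rho_cont _]] := rho_sol.
by move=> linF; apply: real_linear_continuous => // k l; have [] := rho_cont k l.
Qed.

Lemma solution_derive (F : 'M[R[i]]_4 -> R) : real_linear F ->
  forall t : R, 0 < t ->
  is_derive t 1 (fun s => F (rho s)) (F (lindblad h J Ga G (rho t))).
Proof.
have [_ [_ rho_der]] := rho_sol.
move=> linF t t_gt0.
by apply: real_linear_derive => // k l; have [] := rho_der t t_gt0 k l.
Qed.
End Solution.

Theorem theorem1 (R : realType) (h J Gabs Gdph : R)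
  (hJ : J != 0) (hGabs : 0 < Gabs) (hGdph : 0 < Gdph)
  (rhoN rho0t : R -> 'M[R[i]]_4)
  (hN : solves_ME h J Gabs Gdph rhoN)
  (h0 : solves_ME h J Gabs 0 rho0t) :
  exists tstar : R, 0 < tstar /\
    forall t : R, 0 < t < tstar -> work h J rho0t t < work h J rhoN t.
Proof.
have [[N0 _] [Z0 _]] := (hN, h0).
have linE := energy_real_linear h J.
have [e [e_gt0 energy_lt]] : exists e : R, 0 < e /\
    forall t : R, 0 < t < e -> energy h J (rho0t t) < energy h J (rhoN t).
  apply: (@lt_right_of_derive _ _ _
    (fun t => energy h J (lindblad h J Gabs Gdph (rhoN t)))
    (fun t => energy h J (lindblad h J Gabs 0 (rho0t t)))); rewrite ?N0 ?Z0 //.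
  - rewrite (lindblad_dephasing _ _ _ Gdph) linE ltrDr.
    by rewrite mulr_gt0 // energy_dephasing_rho0_gt0.
  - apply: (solution_continuous hN linE).
  - apply: (solution_continuous h0 linE).
  - apply: (solution_continuous hN (energy_lindblad_real_linear _ _ _ _)).
  - apply: (solution_continuous h0 (energy_lindblad_real_linear _ _ _ _)).
  - apply: (solution_derive hN linE).
  - apply: (solution_derive h0 linE).
by exists e; split=> // t /energy_lt; rewrite !work_energy ltrD2r.
Qed.
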